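(* Let $p_j>0$, $q_{j+1}>0$, $r_j\ge 0$ ($j\ge 0$) be the one-step transition probabilities of a random walk on $\mathcal{N}=\{0,1,2,\dots\}$ (up-step $p_j$, holding $r_j$, down-step $q_j$ from state $j$), with $q_0:=0$ and $p_j+q_j+r_j=1$ for all $j\ge0$. Let $\pi_0:=1$, $\pi_n:=\frac{p_0\cdots p_{n-1}}{q_1\cdots q_n}$ ($n\ge1$), and define polynomials $Q_n$ by $Q_0(x)=1$, $p_0Q_1(x)=x-r_0$, and $xQ_n(x)=q_nQ_{n-1}(x)+r_nQ_n(x)+p_nQ_{n+1}(x)$ for $n\ge 1$. Let $\psi$ be the unique Borel probability measure on $[-1,1]$ with infinite support with respect to which the $Q_n$ are orthogonal, and $\eta:=\sup\operatorname{supp}(\psi)$. For $\theta\ge\eta$ and $j\ge 0$ define \[p_j(\theta):=\frac{Q_{j+1}(\theta)}{Q_j(\theta)}\frac{p_j}{\theta},\quad r_j(\theta):=\frac{r_j}{\theta},\quad \pi_j(\theta):=\pi_jQ_j^2(\theta),\] and for $n\ge0$ \[M_n(\theta):=\sum_{j=0}^n\frac{1}{p_j(\theta)\pi_j(\theta)}\sum_{k=0}^j r_k(\theta)\pi_k(\theta).\] If $\eta\le\theta_1\le\theta_2$, then $M_n(\theta_1)\ge M_n(\theta_2)$ for all $n\ge 0$.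
   Context: It is known that $\eta>0$ and that $Q_n(x)>0$ for all $n\ge0$ whenever $x\ge\eta$, so the quantities above are well defined and positive. *)

From HB Require Import structures.
From mathcomp Require Import all_boot all_order all_algebra.
From mathcomp Require Import all_classical all_reals all_analysis.
Set Implicit Arguments. Unset Strict Implicit. Unset Printing Implicit Defensive.
Import Order.TTheory GRing.Theory Num.Theory.
Import numFieldNormedType.Exports.
Local Open Scope classical_set_scope.
Local Open Scope ring_scope.

Section Defs.
Variable R : realType.

Fixpoint Qpair (p q r : nat -> R) (x : R) (n : nat) : R * R :=
  match n with
  | 0%N => (1, (x - r 0%N) / p 0%N)
  | m.+1 => let: (a, b) := Qpair p q r x m in
            (b, ((x - r m.+1) * b - q m.+1 * a) / p m.+1)
  end.

Definition Qpoly (p q r : nat -> R) (n : nat) (x : R) : R := (Qpair p q r x n).1.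

Definition piw (p q : nat -> R) (n : nat) : R :=
  (\prod_(i < n) p i) / (\prod_(i < n) q i.+1).

Definition p_th (p q r : nat -> R) (θ : R) (j : nat) : R :=
  Qpoly p q r j.+1 θ / Qpoly p q r j θ * (p j / θ).
Definition r_th (r : nat -> R) (θ : R) (j : nat) : R := r j / θ.
Definition pi_th (p q r : nat -> R) (θ : R) (j : nat) : R :=
  piw p q j * (Qpoly p q r j θ) ^+ 2.

Definition M_th (p q r : nat -> R) (n : nat) (θ : R) : R :=
  \sum_(j < n.+1) (p_th p q r θ j * pi_th p q r θ j)^-1 *
     \sum_(k < j.+1) r_th r θ k * pi_th p q r θ k.

Definition msupp (mu : set R -> \bar R) : set R :=
  [set x : R | forall U : set R, open U -> U x -> (0 < mu U)%E].

End Defs.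

From HB Require Import structures.
From mathcomp Require Import all_boot all_order all_algebra.
From mathcomp Require Import all_classical all_reals all_analysis measurable_realfun.
From mathcomp Require Import ring lra.
From mathcomp Require finmap.
Import Order.TTheory GRing.Theory Num.Theory.
Import numFieldNormedType.Exports.
Local Open Scope classical_set_scope.
Local Open Scope ring_scope.

(* Writing rho_j(θ) = Q_{j+1}(θ) / Q_j(θ), the factors θ in p_j(θ) and r_k(θ)
   cancel and the j-th summand of M_n(θ) becomes
     (Σ_{k ≤ j} r_k π_k (Q_k(θ) / Q_j(θ))²) / (p_j π_j rho_j(θ)).
   Where all the Q_k are positive, the recurrence
   rho_{j+1} = (θ - r_{j+1} - q_{j+1} / rho_j) / p_{j+1} shows inductively that
   every rho_j is nondecreasing in θ; hence so is Q_j / Q_k = rho_k ⋯ rho_{j-1}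
   for k ≤ j, and every summand is nonincreasing.

   Positivity of the Q_n on [η, ∞) comes from the Christoffel-Darboux formula:
   if Q_0(θ), ..., Q_m(θ) > 0 ≥ Q_{m+1}(θ), the kernel
   K(x) = Σ_{k ≤ m} π_k Q_k(θ) Q_k(x) makes (θ - x) K(x)² a polynomial that is
   nonnegative on supp ψ ⊆ (-∞, θ] while, by orthogonality, its ψ-integral is
   p_m π_m² Q_m(θ) Q_{m+1}(θ) ∫ Q_m² ≤ 0.  So K vanishes on the infinite set
   supp ψ \ {θ}, contradicting K(θ) ≥ 1.  Finally θ ≥ η > r_0 ≥ 0 because
   Q_1(η) > 0. *)

Section Recurrence.
Context {R : realType} (p q r : nat -> R).

Local Notation Q := (Qpoly p q r).

Lemma Qpoly0 x : Q 0 x = 1.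
Proof. by []. Qed.

Lemma Qpoly1 x : Q 1 x = (x - r 0%N) / p 0%N.
Proof. by []. Qed.

Lemma QpolySS n x :
  Q n.+2 x = ((x - r n.+1) * Q n.+1 x - q n.+1 * Q n x) / p n.+1.
Proof. by rewrite /Qpoly /=; case: (Qpair p q r x n). Qed.

Fixpoint Qpair_poly (n : nat) : {poly R} * {poly R} :=
  match n with
  | 0%N => (1, (p 0%N)^-1 *: ('X - (r 0%N)%:P))
  | m.+1 => let: (a, b) := Qpair_poly m in
            (b, (p m.+1)^-1 *: (('X - (r m.+1)%:P) * b - q m.+1 *: a))
  end.

Definition Qpoly_poly n := (Qpair_poly n).1.

Lemma horner_Qpair_poly n x :
  ((Qpair_poly n).1.[x], (Qpair_poly n).2.[x]) = Qpair p q r x n.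
Proof.
elim: n => [|n /=]; first by rewrite /= !hornerE mulrC.
case: (Qpair_poly n) (Qpair p q r x n) => [a b] [a0 b0] /= [<- <-].
by rewrite !hornerE mulrC.
Qed.

Lemma horner_Qpoly_poly n x : (Qpoly_poly n).[x] = Q n x.
Proof. by rewrite /Qpoly_poly /Qpoly -horner_Qpair_poly. Qed.

Lemma piw0 : piw p q 0 = 1.
Proof. by rewrite /piw !big_ord0 divr1. Qed.

Lemma piwS n : piw p q n.+1 = piw p q n * p n / q n.+1.
Proof. by rewrite /piw !big_ord_recr /= invfM; ring. Qed.

Lemma piw_gt0 n : (forall j, 0 < p j) -> (forall j, 0 < q j.+1) -> 0 < piw p q n.
Proof.
by move=> p_gt0 q_gt0; elim: n => [|n IH]; rewrite ?piw0 // piwS divr_gt0 // mulr_gt0.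
Qed.

Lemma christoffel_darboux m x y : (forall j, p j != 0) -> (forall j, q j.+1 != 0) ->
  (x - y) * \sum_(k < m.+1) piw p q k * Q k y * Q k x =
  p m * piw p q m * (Q m.+1 x * Q m y - Q m x * Q m.+1 y).
Proof.
move=> p0 q0; elim: m => [|m IH].
  by rewrite big_ord1 !Qpoly1 !Qpoly0 piw0; field.
rewrite big_ord_recr /= mulrDr IH !QpolySS piwS.
by field; rewrite p0 q0.
Qed.

End Recurrence.

Section Support.
Context {R : realType} (mu : {measure set R -> \bar R}).

Lemma msupp_sub (A : set R) : closed A -> mu (~` A) = 0%E -> msupp mu `<=` A.
Proof.
move=> cA A0 x sx; apply: contrapT => Ax.
have := sx _ (closed_openC cA) Ax.
by rewrite A0 ltxx.
Qed.

(* Every point off the support lies in a null interval with rational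
   endpoints, and there are countably many of those. *)
Lemma msuppC_negligible : mu.-negligible (~` msupp mu).
Proof.
pose I (ab : rat * rat) : set R := `]ratr ab.1, ratr ab.2[%classic.
have mI ab : measurable (I ab) by exact: measurable_itv.
pose F k : set R :=
  if unpickle k is Some ab then
    if mu (I ab) == 0%E then I ab else set0
  else set0.
apply: (negligibleS (A := \bigcup_k F k)); last first.
  apply: negligible_bigcup => k; rewrite /F.
  case: (unpickle k) => [ab|]; last exact: negligible_set0.
  by case: eqP => [I0|_]; [exact/negligibleP|exact: negligible_set0].
move=> x /= /existsNP[U /not_implyP[oU /not_implyP[Ux /negP]]].
rewrite -leNgt measure_le0 => /eqP U0.
have /nbhs_ballP[_/posnumP[d] dU] := oU x Ux.
have ltdx : x - d%:num < x by rewrite ltrBlDr ltrDl.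
have ltxd : x < x + d%:num by rewrite ltrDl.
have [a] := rat_in_itvoo ltdx; have [b] := rat_in_itvoo ltxd.
rewrite !in_itv /= => /andP[xb bd] /andP[da ax].
have IU : I (a, b) `<=` U.
  move=> y; rewrite /I set_itvoo => /andP[ay yb].
  by apply: dU; rewrite /ball /= ltr_norml; apply/andP; split; lra.
have I0 : mu (I (a, b)) = 0%E.
  by apply/eqP; rewrite -measure_le0 -U0 le_measure // inE //; exact: open_measurable.
exists (pickle (a, b)); first by [].
by rewrite /F pickleK I0 eqxx /I set_itvoo; apply/andP.
Qed.

Lemma Rintegral_gt0_msupp (f : R -> R) s :
  continuous f -> mu.-integrable setT (EFin \o f) ->
  (forall x, msupp mu x -> 0 <= f x) -> msupp mu s -> 0 < f s ->
  0 < \int[mu]_x f x.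
Proof.
move=> cf intf f0 ss fs.
have [N [mN N0 suppN]] := msuppC_negligible.
have mf : measurable_fun setT (EFin \o f).
  by apply/measurable_EFinP; exact: continuous_measurable_fun.
have f0N x : (setT `\` N) x -> (0 <= (f x)%:E)%E.
  by move=> [_ Nx]; rewrite lee_fin f0 //; apply: contrapT => /suppN.
pose U := f @^-1` [set y | f s / 2 < y].
have oU : open U by apply: open_comp; [move=> x _; exact: cf|exact: open_gt].
have mU : measurable U := open_measurable oU.
have muU : (0 < mu U)%E.
  by apply: ss => //; rewrite /U /= ltr_pdivrMr // ltr_pMr // ltr1n.
have muUN : mu (U `\` N) = mu U.
  rewrite [RHS](measureDI mu mU mN) [X in (_ + X)%E](_ : _ = 0%E) ?adde0 //.
  by apply/eqP; rewrite -measure_le0 -N0 le_measure // inE //; exact: measurableI.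
have mUN : measurable (U `\` N) := measurableD mU mN.
have intN : (\int[mu]_x (f x)%:E = \int[mu]_(x in setT `\` N) (f x)%:E)%E.
  exact: negligible_integral.
have : (0 < \int[mu]_x (f x)%:E)%E.
  rewrite intN.
  apply: (@lt_le_trans _ _ (\int[mu]_(x in U `\` N) (f s / 2)%:E)%E).
    by rewrite integral_cst // muUN mule_gt0 // lte_fin divr_gt0.
  apply: (@le_trans _ _ (\int[mu]_(x in U `\` N) (f x)%:E)%E).
    apply: ge0_le_integral => //; first by move=> x _; rewrite lee_fin ltW ?divr_gt0.
      exact: measurable_funS mf.
    by move=> x [Ux _]; rewrite lee_fin ltW.
  apply: ge0_subset_integral => //; first exact: measurableD.
    exact: measurable_funS mf.
  by move=> x [_ Nx].
move=> gt0; rewrite /Rintegral.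
by apply: fine_gt0; rewrite gt0 ltey_eq integrable_fin_num //; exact: integrableS intf.
Qed.

End Support.

Lemma poly_eq0_infinite_roots {R : idomainType} (P : {poly R}) (A : set R) :
  infinite_set A -> (forall x, A x -> P.[x] = 0) -> P = 0.
Proof.
move=> Ainf P0; have [B BA Bsize] := infinite_set_fset (size P) Ainf.
apply: (roots_geq_poly_eq0 (rs := finmap.enum_fset B)) => //; last exact: finmap.fset_uniq.
by apply/allP => x xB; apply/eqP/P0/BA.
Qed.

Section CompactSupport.
Context {R : realType} (mu : {finite_measure set R -> \bar R}) (a b : R).
Hypothesis mu_out : mu (~` `[a, b]) = 0%E.

Lemma continuous_integrable (f : R -> R) :
  continuous f -> mu.-integrable setT (EFin \o f).
Proof.
move=> cf; have mf := continuous_measurable_fun cf.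
have mab : measurable (`[a, b] : set R) by exact: measurable_itv.
have mEf : measurable_fun setT (EFin \o f) by exact/measurable_EFinP.
apply/(negligible_integrable (measurableC mab) measurableT mEf mu_out).
rewrite setTD setCK; apply: measurable_bounded_integrable => //.
- by rewrite ltey_eq fin_num_measure.
- exact: measurable_funS mf.
have : bounded_set (f @` `[a, b]).
  apply/compact_bounded/continuous_compact; last exact: segment_compact.
  exact: continuous_subspaceT.
rewrite /= /bounded_near; apply: filterS => M fM x abx.
by apply: fM; exists x.
Qed.

Lemma horner_integrable (P : {poly R}) : mu.-integrable setT (EFin \o horner P).
Proof. by apply: continuous_integrable => x; exact: continuous_horner. Qed.

Definition pint (P : {poly R}) : R := \int[mu]_x P.[x].

Lemma pint_is_linear : linear_for *%R pint.
Proof.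
move=> c P P'; rewrite /pint.
under eq_Rintegral do rewrite hornerD.
rewrite RintegralD //; try exact: horner_integrable.
under eq_Rintegral do rewrite hornerZ.
by rewrite RintegralZl //; exact: horner_integrable.
Qed.

HB.instance Definition _ :=
  GRing.isLinear.Build R {poly R} R *%R pint pint_is_linear.

Lemma pint_ext (P P' : {poly R}) :
  (forall x, P.[x] = P'.[x]) -> pint P = pint P'.
Proof. by move=> PP'; apply: eq_Rintegral => x _; exact: PP'. Qed.

Lemma msupp_le_sup x : msupp mu x -> x <= sup (msupp mu).
Proof.
have cab : closed `[a, b]%classic by exact: interval_closed.
move=> sx; apply: ub_le_sup => //; exists b => y.
move=> /(msupp_sub mu `[a, b] cab mu_out).
by rewrite /= in_itv => /andP[].
Qed.

Section OrthogonalPolynomials.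
Variables (p q r : nat -> R).
Hypotheses (p_gt0 : forall j, 0 < p j) (q_gt0 : forall j, 0 < q j.+1).
Hypothesis msupp_infinite : infinite_set (msupp mu).
Hypothesis Qpoly_orth : forall m n : nat, m <> n ->
  (\int[mu]_x (Qpoly p q r m x * Qpoly p q r n x)%:E = 0)%E.

Local Notation Q := (Qpoly p q r).
Local Notation QP := (Qpoly_poly p q r).
Local Notation π := (piw p q).

Let π_gt0 k : 0 < π k. Proof. exact: piw_gt0. Qed.

Lemma pint_Qpoly_orth i j : i <> j -> pint (QP i * QP j) = 0.
Proof.
move=> ij; rewrite /pint /Rintegral.
under eq_integral do rewrite hornerM !horner_Qpoly_poly.
by rewrite Qpoly_orth.
Qed.

Definition cd_kernel m y : {poly R} := \sum_(k < m.+1) (π k * Q k y) *: QP k.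

Lemma horner_cd_kernel m y x :
  (cd_kernel m y).[x] = \sum_(k < m.+1) π k * Q k y * Q k x.
Proof.
rewrite horner_sum; apply: eq_bigr => k _.
by rewrite hornerZ horner_Qpoly_poly.
Qed.

Lemma pint_Qpoly_cd_kernel j m y : pint (QP j * cd_kernel m y) =
  \sum_(k < m.+1) π k * Q k y * pint (QP j * QP k).
Proof.
rewrite mulr_sumr linear_sum; apply: eq_bigr => k _.
by rewrite -scalerAr linearZ.
Qed.

Lemma pint_cd_kernel_sq m y :
  pint ((y%:P - 'X) * cd_kernel m y ^+ 2) =
  p m * π m * Q m.+1 y * (π m * Q m y) * pint (QP m ^+ 2).
Proof.
set K := cd_kernel m y.
have p_neq0 j : p j != 0 by rewrite gt_eqF.
have q_neq0 j : q j.+1 != 0 by rewrite gt_eqF.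
have -> : pint ((y%:P - 'X) * K ^+ 2) = pint ((p m * π m) *:
    (Q m.+1 y *: (QP m * K) - Q m y *: (QP m.+1 * K))).
  apply: pint_ext => x.
  rewrite !(hornerZ, hornerM, hornerD, hornerN, hornerC, hornerX, horner_exp).
  rewrite !horner_Qpoly_poly /K horner_cd_kernel.
  have := christoffel_darboux p q r m x y p_neq0 q_neq0.
  set S := \sum_(k < m.+1) _ => cd.
  transitivity (- ((x - y) * S) * S); first by ring.
  by rewrite cd; ring.
have orth_gt k j : (k < j)%N -> pint (QP j * QP k) = 0.
  by move=> kj; apply: pint_Qpoly_orth => jk; rewrite jk ltnn in kj.
rewrite linearZ linearB !linearZ /= !pint_Qpoly_cd_kernel big_ord_recr /=.
rewrite big1 => [|k _]; last by rewrite orth_gt ?mulr0 // leqW.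
rewrite big1 => [|k _]; last by rewrite orth_gt ?mulr0.
by rewrite expr2; ring.
Qed.

Lemma Qpoly_gt0_step m y : sup (msupp mu) <= y ->
  (forall k, (k <= m)%N -> 0 < Q k y) -> 0 < Q m.+1 y.
Proof.
move=> supp_y Q_gt0; rewrite ltNge; apply/negP => Q_le0.
set K := cd_kernel m y.
have supp_le x : msupp mu x -> x <= y.
  by move=> sx; apply: le_trans supp_y; exact: msupp_le_sup.
have pint_le0 : pint ((y%:P - 'X) * K ^+ 2) <= 0.
  have pint_sq_ge0 : 0 <= pint (QP m ^+ 2).
    by apply: Rintegral_ge0 => x _; rewrite horner_exp sqr_ge0.
  have := π_gt0 m; have := Q_gt0 m (leqnn m) => Qm πm.
  rewrite pint_cd_kernel_sq -mulrA mulr_le0_ge0 //.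
    by rewrite pmulr_rle0 // mulr_gt0.
  by rewrite mulr_ge0 // mulr_ge0 // ltW.
have K_root x : (msupp mu `\` [set y]) x -> K.[x] = 0.
  move=> [sx /eqP xy]; apply/eqP; apply: contraTT pint_le0 => Kx; rewrite -ltNge.
  have G_at z : ((y%:P - 'X) * K ^+ 2).[z] = (y - z) * K.[z] ^+ 2.
    by rewrite !(hornerM, hornerD, hornerN, hornerC, hornerX, horner_exp).
  rewrite /pint; apply: (@Rintegral_gt0_msupp _ mu _ x) => //.
  - by move=> z; exact: continuous_horner.
  - exact: horner_integrable.
  - by move=> z sz; rewrite G_at mulr_ge0 ?sqr_ge0 // subr_ge0 supp_le.
  - by rewrite G_at mulr_gt0 ?exprn_even_gt0 // subr_gt0 lt_neqAle xy supp_le.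
have K0 : K = 0.
  apply: poly_eq0_infinite_roots K_root.
  exact: infinite_setD msupp_infinite (finite_set1 y).
have : 1 <= K.[y].
  rewrite /K horner_cd_kernel big_ord_recl /= Qpoly0 piw0 !mulr1 lerDl.
  by apply: sumr_ge0 => k _; rewrite -mulrA -expr2 mulr_ge0 ?sqr_ge0 // ltW ?π_gt0.
by rewrite K0 horner0 ler10.
Qed.

Lemma Qpoly_gt0 n y : sup (msupp mu) <= y -> 0 < Q n y.
Proof.
move=> supp_y; elim: n {-2}n (leqnn n) => [|n IH] k.
  by rewrite leqn0 => /eqP ->.
rewrite leq_eqVlt => /orP[/eqP ->|]; last exact: IH.
exact: Qpoly_gt0_step.
Qed.

End OrthogonalPolynomials.
End CompactSupport.

Section Monotonicity.
Context {R : realType} (p q r : nat -> R).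
Hypotheses (p_gt0 : forall j, 0 < p j) (q_gt0 : forall j, 0 < q j.+1).
Hypothesis r_ge0 : forall j, 0 <= r j.

Local Notation Q := (Qpoly p q r).
Local Notation π := (piw p q).

Let π_gt0 k : 0 < π k. Proof. exact: piw_gt0. Qed.

Definition Qratio k x := Q k.+1 x / Q k x.

Lemma QratioS k x : Q k x != 0 -> Q k.+1 x != 0 ->
  Qratio k.+1 x = (x - r k.+1 - q k.+1 / Qratio k x) / p k.+1.
Proof. by move=> Qk Qk1; rewrite /Qratio QpolySS; field; rewrite Qk Qk1 gt_eqF. Qed.

Lemma Qratio_gt0 x k : (forall k, 0 < Q k x) -> 0 < Qratio k x.
Proof. by move=> Q_gt0; rewrite divr_gt0. Qed.

Lemma M_thE n x : x != 0 -> (forall k, 0 < Q k x) ->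
  M_th p q r n x = \sum_(j < n.+1)
    (\sum_(k < j.+1) r k * π k * (Q k x / Q j x) ^+ 2) / (p j * π j * Qratio j x).
Proof.
move=> x0 Q_gt0; apply: eq_bigr => j _.
rewrite /p_th /r_th /pi_th /Qratio !mulr_sumr mulr_suml; apply: eq_bigr => k _.
have := Q_gt0 j; have := Q_gt0 j.+1; have := π_gt0 j.
by move=> πj Qj1 Qj; field; rewrite x0 !gt_eqF.
Qed.

Variables (x1 x2 : R).
Hypotheses (Q1_gt0 : forall k, 0 < Q k x1) (Q2_gt0 : forall k, 0 < Q k x2).
Hypothesis x12 : x1 <= x2.

Lemma Qratio_le k : Qratio k x1 <= Qratio k x2.
Proof.
elim: k => [|k IH].
  by rewrite /Qratio !Qpoly1 !Qpoly0 !divr1 ler_pM2r ?invr_gt0 // lerD2r.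
rewrite !QratioS ?gt_eqF // ler_pM2r ?invr_gt0 // lerB ?lerD2r //.
apply: ler_wpM2l; first exact: ltW.
by rewrite lef_pV2 ?posrE ?Qratio_gt0.
Qed.

Lemma Qpoly_ratio_ge k j : (k <= j)%N -> Q k x2 / Q j x2 <= Q k x1 / Q j x1.
Proof.
rewrite leq_eqVlt => /orP[/eqP ->|kj]; first by rewrite !divff ?gt_eqF.
have prodE x : (forall i, 0 < Q i x) ->
    Q k x / Q j x = (\prod_(k <= i < j) Qratio i x)^-1.
  by move=> Q_gt0; rewrite telescope_prodf ?invf_div // => i _; rewrite gt_eqF.
have prod_gt0 x : (forall i, 0 < Q i x) -> 0 < \prod_(k <= i < j) Qratio i x.
  by move=> Q_gt0; apply: prodr_gt0 => i _; exact: Qratio_gt0.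
rewrite !prodE // lef_pV2 ?posrE ?prod_gt0 //.
by apply: ler_prod => i _; rewrite Qratio_le ltW // Qratio_gt0.
Qed.

Lemma M_th_le n : 0 < x1 -> M_th p q r n x2 <= M_th p q r n x1.
Proof.
move=> x1_gt0; have x2_gt0 := lt_le_trans x1_gt0 x12.
rewrite !M_thE ?gt_eqF //; apply: ler_sum => j _.
have weight_gt0 x : (forall k, 0 < Q k x) -> 0 < p j * π j * Qratio j x.
  by move=> Q_gt0; apply: mulr_gt0; [exact: mulr_gt0 | exact: Qratio_gt0].
apply: ler_pM.
- by apply: sumr_ge0 => k _; rewrite mulr_ge0 ?sqr_ge0 // mulr_ge0 ?r_ge0 // ltW.
- by rewrite invr_ge0 ltW ?weight_gt0.
- apply: ler_sum => k _; apply: ler_wpM2l; first by rewrite mulr_ge0 ?r_ge0 // ltW.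
  have ratio_ge0 x : (forall i, 0 < Q i x) -> 0 <= Q k x / Q j x.
    by move=> Q_gt0; rewrite ltW ?divr_gt0.
  rewrite ler_sqr ?nnegrE ?ratio_ge0 //.
  by apply: Qpoly_ratio_ge; rewrite -ltnS.
- by rewrite lef_pV2 ?posrE ?weight_gt0 // ler_pM2l ?Qratio_le // mulr_gt0.
Qed.

End Monotonicity.

Theorem lemma3 (R : realType) (p q r : nat -> R)
  (hp : forall j, 0 < p j) (hq : forall j, 0 < q j.+1) (hr : forall j, 0 <= r j)
  (hq0 : q 0%N = 0) (hsum : forall j, p j + q j + r j = 1)
  (psi : probability R R)
  (hsupp : psi (~` `[-1, 1]) = 0%E)
  (hinf : infinite_set (msupp psi))
  (horth : forall m n : nat, m <> n ->
     (\int[psi]_x (Qpoly p q r m x * Qpoly p q r n x)%:E = 0)%E)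
  (eta : R) (heta : eta = sup (msupp psi)) :
  forall θ1 θ2 : R, eta <= θ1 -> θ1 <= θ2 ->
  forall n : nat, M_th p q r n θ2 <= M_th p q r n θ1.
Proof.
move=> θ1 θ2 eta_θ1 θ12 n; subst eta.
have Q_gt0 θ k : sup (msupp psi) <= θ -> 0 < Qpoly p q r k θ.
  exact: (Qpoly_gt0 _ _ _ hsupp _ _ _ hp hq hinf horth).
have θ1_gt0 : 0 < θ1.
  have := Q_gt0 θ1 1%N eta_θ1; rewrite Qpoly1 pmulr_lgt0 ?invr_gt0 // subr_gt0.
  exact: le_lt_trans (hr 0%N).
apply: M_th_le => // k; apply: Q_gt0 => //; exact: le_trans θ12.
Qed.
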